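(* Let $T_1=(Q_1,\Sigma,\Delta,R_1,q_1^0)$ and $T_2=(Q_2,\Delta,\Omega,R_2,q_2^0)$ be top-down tree transducers, let $\hat{T}_1$ be the product construction of $T_1$ and the domain automaton of $T_2$, and let $M$ be the look-ahead transducer constructed from $T_1$ and $T_2$ as described in the context. Let $(q_1,S)$ be a state of $\hat{T}_1$ and $q_2$ a state of $T_2$ with $q_2\in S$. Then for the state $(q_1,S,q_2)$ of $M$, $\text{dom}((q_1,S,q_2))=\text{dom}((q_1,S))$.
   Context: A top-down tree transducer $T=(Q,\Sigma,\Delta,R,q_0)$ has finite state set $Q$, ranked input/output alphabets $\Sigma,\Delta$, initial state $q_0$, and finite rule set $R$ of rules $q(a(x_1,\dots,x_k))\to t$ with $a\in\Sigma_k$ ($\Sigma_k$ = symbols of rank $k$) and $t$ a tree over $\Delta$ whose leaves may additionally be of the form $q'(x_i)$, $q'\in Q$, $i\in[k]$; rules are used as rewrite rules in the usual way; for a state $q$ (of a transducer, with or without look-ahead), $\text{dom}(q)$ is the set of input trees $s$ on which $q$ produces at least one output tree (containing no states). For $q\in Q$, $a\in\Sigma_k$, $\text{rhs}_T(q,a)$ is the set of right-hand sides of rules with left-hand side $q(a(x_1,\dots,x_k))$; for a right-hand side $\xi$ (resp. a set $\Gamma$ of right-hand sides), $\xi[x_i]$ (resp. $\Gamma[x_i]$) is the set of states $q'$ such that $q'(x_i)$ occurs in $\xi$ (resp. in some tree of $\Gamma$). Domain automaton of $T$: the top-down tree automaton (transducer over $\Sigma$ with rules of the form $p(a(x_1,\dots,x_k))\to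 a(p_1(x_1),\dots,p_k(x_k))$) with states all subsets of $Q$, initial state $\{q_0\}$, rules $S(a(x_1,\dots,x_k))\to a(S_1(x_1),\dots,S_k(x_k))$ for every $a\in\Sigma_k$, nonempty $S=\{q_1,\dots,q_n\}\subseteq Q$ and nonempty $\Gamma_j\subseteq\text{rhs}_T(q_j,a)$ ($j\in[n]$), where $S_i=\bigcup_j\Gamma_j[x_i]$, and rules $\emptyset(a(x_1,\dots,x_k))\to a(\emptyset(x_1),\dots,\emptyset(x_k))$ for all $a$; for an automaton state $l$, $\text{dom}(l)$ is the set of trees accepted from $l$. Product construction of transducers $T=(Q,\Sigma,\Delta,R,q_0)$ and $T'=(Q',\Delta,\Omega,R',q'_0)$: the transducer with states $Q\times Q'$, initial state $(q_0,q'_0)$, and, for every rule $q(a(x_1,\dots,x_k))\to\xi$ of $T$, every $p\in Q'$ and every tree $\zeta$ derivable from $p(\xi)$ using rules of $T'$ in which the leaves of $\xi$ of the form $q''(x_i)$ are treated as unrewritable symbols and a state $p'$ applied to such a leaf stays as $p'(q''(x_i))$, the rule $(q,p)(a(x_1,\dots,x_k))\to\zeta'$ (said to be obtained from the rule $q(a(x_1,\dots,x_k))\to\xi$ by translating $\xi$ with $p$), where $\zeta'$ replaces each $p'(q''(x_i))$ by $(q'',p')(x_i)$. A top-down tree transducer with look-ahead is a tuple $(Q,\Sigma,\Delta,R,q_0,B)$ where $B$ is a top-down tree automaton over $\Sigma$ with state set $L$ and rules have the form $q(a(x_1\!:\!l_1,\dots,x_k\!:\!l_k))\to t$ with $l_i\in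 L$; on input $s$, each node $v$ with label $a\in\Sigma_k$ is first relabeled by $\langle a,l_1,\dots,l_k\rangle$ where $l_i\in L$ are such that the $i$-th subtree of $v$ is in $\text{dom}(l_i)$, and the relabeled tree is then processed reading each rule as $q(\langle a,l_1,\dots,l_k\rangle(x_1,\dots,x_k))\to t$. Construction of $M$: let $\hat{T}_1$ be the product construction of $T_1$ and the domain automaton of $T_2$ (states written $(q,S)$ with $q\in Q_1$, $S\subseteq Q_2$), and $N$ the product construction of $\hat{T}_1$ and $T_2$ (states written $(q,S,q')$). The states of $M$ are the $(q,S,q')$ with $q'\in S$; its initial state is $(q_1^0,\{q_2^0\},q_2^0)$; its look-ahead automaton is the domain automaton $\hat{A}$ of $\hat{T}_1$. For every rule $(q,S,q')(a(x_1,\dots,x_k))\to\gamma$ of $N$ involving only such states, obtained from the rule $(q,S)(a(x_1,\dots,x_k))\to\xi$ of $\hat{T}_1$ by translating $\xi$ with $q'$, and for all states $l_1,\dots,l_k$ of $\hat{A}$ with $\xi[x_i]\subseteq l_i$ ($i\in[k]$), $M$ has the rule $(q,S,q')(a(x_1\!:\!l_1,\dots,x_k\!:\!l_k))\to\gamma$. *)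

From mathcomp Require Import all_boot.
From Stdlib Require List.

Set Implicit Arguments.
Unset Strict Implicit.
Unset Printing Implicit Defensive.

(* An alphabet is a finType [L] with a rank function
   [rk : L -> nat]; [tree L] are (a priori unranked) trees, and
   [wf_tree rk t] says that t is a tree over the ranked alphabet (L, rk).     *)
Inductive tree (L : Type) := Node of L & seq (tree L).
Arguments Node {L}.

Inductive wf_tree (L : Type) (rk : L -> nat) : tree L -> Prop :=
| wf_tree_node a ss :
    size ss = rk a -> (forall s, List.In s ss -> wf_tree rk s) ->
    wf_tree rk (Node a ss).

(* Right-hand sides: trees over L whose leaves may be q(x_i).
   [RVar q i] stands for q(x_{i+1}): variables are indexed from 0,
   so x_1,...,x_k are RVar _ 0, ..., RVar _ (k-1). *)
Inductive rhs (Q L : Type) := RVar of Q & nat | RNode of L & seq (rhs Q L).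
Arguments RVar {Q L}.
Arguments RNode {Q L}.

Inductive wf_rhs (Q L : Type) (rk : L -> nat) (k : nat) : rhs Q L -> Prop :=
| wf_rhs_var q i : i < k -> wf_rhs rk k (RVar q i)
| wf_rhs_node b xs :
    size xs = rk b -> (forall x, List.In x xs -> wf_rhs rk k x) ->
    wf_rhs rk k (RNode b xs).

Inductive occurs (Q L : Type) (q : Q) (i : nat) : rhs Q L -> Prop :=
| occurs_var : occurs q i (RVar q i)
| occurs_node b xs x : List.In x xs -> occurs q i x -> occurs q i (RNode b xs).

Inductive subst (Q L X : Type) (emb : L -> seq X -> X) (F : Q -> nat -> X -> Prop)
  : rhs Q L -> X -> Prop :=
| subst_var q i x : F q i x -> subst emb F (RVar q i) x
| subst_node b xis xs :
    List.Forall2 (subst emb F) xis xs -> subst emb F (RNode b xis) (emb b xs).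

(* Top-down tree transducers.  The rule set is given as a predicate
   [rule q a xi] meaning  q(a(x_1,...,x_k)) -> xi  is a rule. *)
Record tdtt (Q Sig Del : Type) := TDTT {
  rule : Q -> Sig -> rhs Q Del -> Prop;
  init : Q }.

Definition is_tdtt (Q Sig Del : Type) (rkS : Sig -> nat) (rkD : Del -> nat)
  (T : tdtt Q Sig Del) : Prop :=
  (exists l : list (Q * Sig * rhs Q Del),
      forall q a x, rule T q a x <-> List.In (q, a, x) l) /\
  (forall q a x, rule T q a x -> wf_rhs rkD (rkS a) x).

(* Semantics (derivations with the rules used as rewrite rules):
   [sem R q s t] : from q(s) the output tree t (without states) is derivable. *)
Inductive sem (Q Sig Del : Type) (R : Q -> Sig -> rhs Q Del -> Prop)
  : Q -> tree Sig -> tree Del -> Prop :=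
| sem_rule q a ss xi t :
    R q a xi ->
    subst (@Node Del)
      (fun q' i t' => exists s', List.nth_error ss i = Some s' /\ sem R q' s' t')
      xi t ->
    sem R q (Node a ss) t.

Definition dom (Q Sig Del : Type) (R : Q -> Sig -> rhs Q Del -> Prop) (q : Q)
  (s : tree Sig) : Prop := exists t, sem R q s t.

(* Product construction.  [translate R' p xi z] : z = zeta' where zeta is a
   tree derivable from p(xi) with the rules R' of T', leaves q''(x_i) of xi
   being unrewritable (p'(q''(x_i)) stays), and each p'(q''(x_i)) replaced
   by (q'',p')(x_i). *)
Inductive translate (Q Q' Del Om : Type) (R' : Q' -> Del -> rhs Q' Om -> Prop)
  : Q' -> rhs Q Del -> rhs (Q * Q') Om -> Prop :=
| translate_var p q i : translate R' p (RVar q i) (RVar (q, p) i)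
| translate_node p b xis eta z :
    R' p b eta ->
    subst (@RNode (Q * Q') Om)
      (fun p' j z' => exists xj, List.nth_error xis j = Some xj /\ translate R' p' xj z')
      eta z ->
    translate R' p (RNode b xis) z.

Definition prod_rule (Q Q' Sig Del Om : Type)
  (R : Q -> Sig -> rhs Q Del -> Prop) (R' : Q' -> Del -> rhs Q' Om -> Prop)
  (qp : Q * Q') (a : Sig) (z : rhs (Q * Q') Om) : Prop :=
  exists xi, R qp.1 a xi /\ translate R' qp.2 xi z.

(* Domain automaton of a transducer with rules R, input alphabet (Sig,rk):
   states {set Q}, rules S(a(x_1..x_k)) -> a(S_1(x_1),...,S_k(x_k)). *)
Definition dom_aut_rule (Q : finType) (Sig Del : Type) (rk : Sig -> nat)
  (R : Q -> Sig -> rhs Q Del -> Prop)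
  (S : {set Q}) (a : Sig) (xi : rhs {set Q} Sig) : Prop :=
  exists Ss : seq {set Q},
    size Ss = rk a /\
    xi = RNode a [seq RVar (nth set0 Ss i) i | i <- iota 0 (rk a)] /\
    ( (S = set0 /\ forall i, i < rk a -> nth set0 Ss i = set0)
      \/
      (S != set0 /\
       exists Gamma : Q -> rhs Q Del -> Prop,
         (forall q, q \in S ->
            (exists x, Gamma q x) /\ (forall x, Gamma q x -> R q a x)) /\
         (forall i, i < rk a -> forall q',
            q' \in nth set0 Ss i <->
            exists2 q, q \in S & exists x, Gamma q x /\ occurs q' i x))).

(* Top-down tree transducers with look-ahead.  A rule
   q(a(x_1:l_1,...,x_k:l_k)) -> t is represented as [R q (a, [:: l_1;..;l_k]) t].
   [domL l] is dom(l) for the look-ahead automaton. *)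
Inductive relabel (Sig L : Type) (domL : L -> tree Sig -> Prop)
  : tree Sig -> tree (Sig * seq L) -> Prop :=
| relabel_node a ss ls rs :
    List.Forall2 domL ls ss ->
    List.Forall2 (relabel domL) ss rs ->
    relabel domL (Node a ss) (Node (a, ls) rs).

Definition la_dom (Q Sig Om L : Type) (domL : L -> tree Sig -> Prop)
  (R : Q -> Sig * seq L -> rhs Q Om -> Prop) (q : Q) (s : tree Sig) : Prop :=
  exists r, relabel domL s r /\ dom R q r.

Section Construction.
Variables (Q1 Q2 : finType) (Sig Del Om : Type).
Variables (rkS : Sig -> nat) (rkD : Del -> nat).
Variables (R1 : Q1 -> Sig -> rhs Q1 Del -> Prop) (R2 : Q2 -> Del -> rhs Q2 Om -> Prop).

Definition hat_rule : Q1 * {set Q2} -> Sig -> rhs (Q1 * {set Q2}) Del -> Prop :=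
  prod_rule R1 (dom_aut_rule rkD R2).

Definition N_rule : Q1 * {set Q2} * Q2 -> Sig -> rhs (Q1 * {set Q2} * Q2) Om -> Prop :=
  prod_rule hat_rule R2.

Definition Mvalid (x : Q1 * {set Q2} * Q2) : bool := x.2 \in x.1.2.

Definition Ahat_rule :=
  dom_aut_rule rkS hat_rule.

Definition M_rule (x : Q1 * {set Q2} * Q2)
  (al : Sig * seq {set (Q1 * {set Q2})}) (g : rhs (Q1 * {set Q2} * Q2) Om) : Prop :=
  Mvalid x /\ (forall y i, occurs y i g -> Mvalid y) /\
  size al.2 = rkS al.1 /\
  exists xi, hat_rule x.1 al.1 xi /\ translate R2 x.2 xi g /\
    (forall i, i < rkS al.1 -> forall y, occurs y i xi -> y \in nth set0 al.2 i).

Definition M_init (q10 : Q1) (q20 : Q2) : Q1 * {set Q2} * Q2 := (q10, [set q20], q20).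

Definition M_dom (x : Q1 * {set Q2} * Q2) (s : tree Sig) : Prop :=
  la_dom (dom Ahat_rule) M_rule x s.

End Construction.

(* The domain automaton of a transducer accepts a well-ranked tree from a state S
   exactly when the tree lies in dom(q) for every q in S.

   If M derives from (q,S,q') on a relabelled tree, its root rule comes from a
   rule (q,S)(a(x_1,...,x_k)) -> xi of \hat T_1 whose states at x_i lie in the
   look-ahead state l_i.  The i-th subtree is accepted from l_i, so it lies in
   the domain of each of these states, and xi applies: no induction is needed
   in this direction.

   Conversely, relabel every node by the sets of states of \hat T_1 whose
   domain contains its children.  A rule of \hat T_1 at (q,S) is built from a
   rule of the domain automaton of T_2 at S.  That rule picks, for each q' in
   S, a rule of T_2 whose states at x_j lie in the j-th child state.  Hence xi
   translates with q' into a rule of M whose states (q'',S'',p) all satisfy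
   p \in S'', and induction on the input tree finishes the proof. *)

From mathcomp Require Import all_boot boolp.
From Stdlib Require List.

Set Implicit Arguments.
Unset Strict Implicit.
Unset Printing Implicit Defensive.

Lemma tree_ind_in (L : Type) (P : tree L -> Prop) :
  (forall a ss, (forall s, List.In s ss -> P s) -> P (Node a ss)) -> forall t, P t.
Proof.
move=> IH; fix tree_ind_in 1 => -[a ss]; apply: IH.
elim: ss => [|s ss IHss] s' /=; first by case.
by case=> [<- | /IHss]; [apply: tree_ind_in | apply].
Qed.

Lemma rhs_ind_in (Q L : Type) (P : rhs Q L -> Prop) :
  (forall q i, P (RVar q i)) ->
  (forall b xis, (forall xi, List.In xi xis -> P xi) -> P (RNode b xis)) ->
  forall xi, P xi.
Proof.
move=> IHvar IHnode; fix rhs_ind_in 1 => -[q i | b xis]; first exact: IHvar.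
apply: IHnode; elim: xis => [|xi xis IHxis] xi' /=; first by case.
by case=> [<- | /IHxis]; [apply: rhs_ind_in | apply].
Qed.

Section Lists.
Variables (A B : Type).

Lemma nth_errorE (x0 : A) (s : seq A) i :
  List.nth_error s i = if i < size s then Some (nth x0 s i) else None.
Proof. by elim: s i => [|x s IHs] [|i] //=; rewrite IHs. Qed.

Lemma nth_error_map (f : A -> B) (s : seq A) i :
  List.nth_error (map f s) i = omap f (List.nth_error s i).
Proof. by elim: s i => [|x s IHs] [|i] //=. Qed.

Variable R : A -> B -> Prop.

Lemma Forall2_nth_error l1 l2 i x :
  List.Forall2 R l1 l2 -> List.nth_error l1 i = Some x ->
  exists2 y, List.nth_error l2 i = Some y & R x y.
Proof.
move=> HR; elim: HR i => [|x1 y1 l1' l2' Rxy1 _ IH] [|i] //=; last exact: IH.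
by case=> <-; exists y1.
Qed.

Lemma Forall2_In l1 l2 x :
  List.Forall2 R l1 l2 -> List.In x l1 -> exists2 y, List.In y l2 & R x y.
Proof.
move=> HR /(List.In_nth_error l1 x)[i Hi].
have [y Hy Rxy] := Forall2_nth_error HR Hi.
by exists y; first exact: List.nth_error_In Hy.
Qed.

Lemma Forall2_exists l1 :
  (forall x, List.In x l1 -> exists y, R x y) -> exists l2, List.Forall2 R l1 l2.
Proof.
elim: l1 => [|x l1 IH] Hl1; first by exists [::].
have [y Rxy] := Hl1 x (or_introl erefl).
have [l2 Hl2] := IH (fun z Hz => Hl1 z (or_intror Hz)).
by exists (y :: l2); constructor.
Qed.

Lemma Forall2_impl_in (R' : A -> B -> Prop) l1 l2 :
  (forall x y, List.In x l1 -> R x y -> R' x y) ->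
  List.Forall2 R l1 l2 -> List.Forall2 R' l1 l2.
Proof.
move=> RR' HR; elim: HR RR' => [|x y l1' l2' Rxy _ IH] RR'; constructor.
  exact: RR' (or_introl erefl) Rxy.
by apply: IH => x' y' Hx'; apply: RR' (or_intror Hx').
Qed.

Lemma Forall2_map_l (f : B -> A) l :
  (forall y, List.In y l -> R (f y) y) -> List.Forall2 R (map f l) l.
Proof.
elim: l => [|y l IH] Hl /=; constructor; first exact: Hl (or_introl erefl).
by apply: IH => y' Hy'; apply: Hl (or_intror Hy').
Qed.

Lemma Forall2_map_r (g : A -> B) l :
  (forall x, List.In x l -> R x (g x)) -> List.Forall2 R l (map g l).
Proof.
elim: l => [|x l IH] Hl /=; constructor; first exact: Hl (or_introl erefl).
by apply: IH => x' Hx'; apply: Hl (or_intror Hx').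
Qed.

End Lists.

Section Subst.
Variables (Q L X : Type) (emb : L -> seq X -> X).

Lemma subst_impl (F G : Q -> nat -> X -> Prop) xi t :
  (forall q i x, F q i x -> G q i x) -> subst emb F xi t -> subst emb G xi t.
Proof.
move=> FG; elim/rhs_ind_in: xi t => [q i | b xis IH] t Ht.
  by inversion Ht; constructor; apply: FG.
inversion Ht as [|b' xis' ts Hts]; constructor.
by apply: Forall2_impl_in Hts => xi t' /IH; apply.
Qed.

Lemma subst_occurs (F : Q -> nat -> X -> Prop) xi t q i :
  subst emb F xi t -> occurs q i xi -> exists x, F q i x.
Proof.
move=> Ht Hocc; elim: Hocc t Ht => [|b xis xi' Hxi' _ IH] t Ht.
  by inversion Ht; exists t.
inversion Ht as [|b' xis' ts Hts].
by have [t' _ /IH] := Forall2_In Hts Hxi'.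
Qed.

Lemma subst_exists (F : Q -> nat -> X -> Prop) xi :
  (forall q i, occurs q i xi -> exists x, F q i x) -> exists t, subst emb F xi t.
Proof.
elim/rhs_ind_in: xi => [q i | b xis IH] Hocc.
  by have [x Hx] := Hocc q i (occurs_var _ _ _); exists x; constructor.
have [ts Hts] : exists ts, List.Forall2 (subst emb F) xis ts.
  apply: Forall2_exists => xi Hxi; apply: IH => // q i Hqi.
  exact: Hocc (occurs_node b Hxi Hqi).
by exists (emb b ts); constructor.
Qed.

End Subst.

Lemma subst_RNode_occurs (Q P L : Type) (F : Q -> nat -> rhs P L -> Prop) xi z p i :
  subst (@RNode P L) F xi z -> occurs p i z ->
  exists q j z', F q j z' /\ occurs p i z'.
Proof.
move=> Hz Hocc; elim: Hocc xi Hz => [|b zs z' Hz' Hocc IH] xi Hz.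
  by inversion Hz as [q j x HF|]; exists q, j, (RVar p i); split; last exact: occurs_var.
inversion Hz as [q j z'' HF|b' xis zs' Hzs].
  by exists q, j, (RNode b zs); split; last exact: occurs_node Hz' Hocc.
have [xi' _ /IH] := Forall2_In (List.Forall2_flip Hzs) Hz'; apply.
Qed.

Lemma translate_occurs (Q Q' Del Om : Type) (R' : Q' -> Del -> rhs Q' Om -> Prop)
  p (xi : rhs Q Del) z q p' i :
  translate R' p xi z -> occurs (q, p') i z -> occurs q i xi.
Proof.
elim/rhs_ind_in: xi p z => [q0 i0 | b xis IH] p z Hz Hocc.
  by inversion Hz; subst; inversion Hocc; exact: occurs_var.
inversion Hz as [|p0 b0 xis0 eta z0 Heta Hsub]; subst.
have [p'' [j [z' [[xj [Hxj Hz']] Hocc']]]] := subst_RNode_occurs Hsub Hocc.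
have Hin := List.nth_error_In _ _ Hxj.
exact: (occurs_node b Hin (IH xj Hin p'' z' Hz' Hocc')).
Qed.

Lemma wf_rhs_occurs (Q L : Type) (rk : L -> nat) k (xi : rhs Q L) q i :
  wf_rhs rk k xi -> occurs q i xi -> i < k.
Proof.
move=> Hwf Hocc; elim: Hocc Hwf => [|b xis xi' Hxi' _ IH] Hwf.
  by inversion Hwf.
by inversion Hwf as [|b' xis' _ Hxis]; apply: IH (Hxis _ Hxi').
Qed.

Definition bounded_vars (Q Sig Del : Type) (rk : Sig -> nat)
    (R : Q -> Sig -> rhs Q Del -> Prop) : Prop :=
  forall q a xi q' i, R q a xi -> occurs q' i xi -> i < rk a.

Lemma is_tdtt_bounded_vars (Q Sig Del : Type) (rkS : Sig -> nat) (rkD : Del -> nat)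
    (T : tdtt Q Sig Del) :
  is_tdtt rkS rkD T -> bounded_vars rkS (rule T).
Proof. by case=> _ wfT q a xi q' i /wfT; apply: wf_rhs_occurs. Qed.

Lemma prod_rule_bounded_vars (Q Q' Sig Del Om : Type) (rk : Sig -> nat)
    (R : Q -> Sig -> rhs Q Del -> Prop) (R' : Q' -> Del -> rhs Q' Om -> Prop) :
  bounded_vars rk R -> bounded_vars rk (prod_rule R R').
Proof.
by move=> bR [q p] a z [q' p'] i [xi [Hxi Hz]] /(translate_occurs Hz); exact: bR Hxi.
Qed.

Section Domains.
Variables (Q Sig Del : Type) (R : Q -> Sig -> rhs Q Del -> Prop).

Definition dom_child (ss : seq (tree Sig)) (q : Q) (i : nat) : Prop :=
  exists2 s, List.nth_error ss i = Some s & dom R q s.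

Lemma dom_Node q a ss :
  dom R q (Node a ss) <->
  exists2 xi, R q a xi & forall q' i, occurs q' i xi -> dom_child ss q' i.
Proof.
split=> [[t Ht] | [xi Hxi Hchild]].
  inversion Ht as [q0 a0 ss0 xi t0 Hxi Hsub]; subst; exists xi => // q' i Hocc.
  by have [t' [s [Hs Hsem]]] := subst_occurs Hsub Hocc; exists s => //; exists t'.
have [t Ht] : exists t, subst (@Node Del)
    (fun q' i t' => exists s, List.nth_error ss i = Some s /\ sem R q' s t') xi t.
  by apply: subst_exists => q' i /Hchild[s Hs [t Ht]]; exists t, s.
by exists t; apply: sem_rule Hxi Ht.
Qed.

End Domains.

Arguments dom_Node {Q Sig Del R q a ss}.

Section DomainAutomaton.
Variables (Q : finType) (Sig Del : Type) (rk : Sig -> nat).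
Variable R : Q -> Sig -> rhs Q Del -> Prop.

Definition aut_args (a : Sig) (Ss : seq {set Q}) : seq (rhs {set Q} Sig) :=
  [seq RVar (nth set0 Ss i) i | i <- iota 0 (rk a)].

Lemma nth_error_aut_args a Ss i :
  List.nth_error (aut_args a Ss) i =
  if i < rk a then Some (RVar (nth set0 Ss i) i) else None.
Proof.
rewrite (nth_errorE (RVar set0 0)) size_map size_iota.
by case: ifP => // Hi; rewrite (nth_map 0) ?size_iota // nth_iota.
Qed.

Lemma occurs_aut_args a Ss S i :
  occurs S i (RNode a (aut_args a Ss)) <-> i < rk a /\ S = nth set0 Ss i.
Proof.
split=> [Hocc | [Hi ->]].
  inversion Hocc as [|a' xs x Hx Hocc']; subst.
  have [j] := List.In_nth_error _ _ Hx; rewrite nth_error_aut_args.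
  by case: ifP => // Hj [Ex]; subst x; inversion Hocc'.
apply: (@occurs_node _ _ _ _ a _ (RVar (nth set0 Ss i) i)); last exact: occurs_var.
by apply: (List.nth_error_In _ i); rewrite nth_error_aut_args Hi.
Qed.

Lemma subst_aut_args (X : Type) (emb : Sig -> seq X -> X) F a Ss t :
  subst emb F (RNode a (aut_args a Ss)) t ->
  exists2 ts, t = emb a ts &
    forall i, i < rk a ->
      exists2 ti, List.nth_error ts i = Some ti & F (nth set0 Ss i) i ti.
Proof.
move=> Ht; inversion Ht as [|a' xis ts Hts]; exists ts => // i Hi.
have Hnth : List.nth_error (aut_args a Ss) i = Some (RVar (nth set0 Ss i) i).
  by rewrite nth_error_aut_args Hi.
have [ti Hti Hsub] := Forall2_nth_error Hts Hnth.
by exists ti => //; inversion Hsub.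
Qed.

Lemma dom_aut_rule_pick S a xi q :
  bounded_vars rk R -> dom_aut_rule rk R S a xi -> q \in S ->
  exists2 Ss, xi = RNode a (aut_args a Ss) &
    exists2 x, R q a x & forall q' i, occurs q' i x -> i < rk a /\ q' \in nth set0 Ss i.
Proof.
move=> bR [Ss [_ [-> [[-> _] | [_ [Gamma [HGamma HSs]]]]]]]; first by rewrite inE.
move=> Hq; have [[x Hx] GammaR] := HGamma q Hq.
exists Ss => //; exists x => [|q' i Hocc]; first exact: GammaR.
have Hi := bR _ _ _ _ _ (GammaR x Hx) Hocc.
by split=> //; apply/(HSs i Hi); exists q => //; exists x.
Qed.

Lemma dom_aut_rule_intro (S : {set Q}) a (Gamma : Q -> rhs Q Del -> Prop) :
  (forall q, q \in S -> exists x, Gamma q x) -> (forall q x, Gamma q x -> R q a x) ->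
  exists Ss, dom_aut_rule rk R S a (RNode a (aut_args a Ss)) /\
    forall i q', i < rk a -> q' \in nth set0 Ss i ->
      exists2 q, q \in S & exists x, Gamma q x /\ occurs q' i x.
Proof.
move=> HGamma GammaR.
pose child_states i :=
  [set q' | `[< exists2 q, q \in S & exists x, Gamma q x /\ occurs q' i x >]].
pose Ss := map child_states (iota 0 (rk a)).
have nth_Ss i q' : i < rk a -> q' \in nth set0 Ss i <->
    exists2 q, q \in S & exists x, Gamma q x /\ occurs q' i x.
  by move=> Hi; rewrite (nth_map 0) ?size_iota // nth_iota // inE; split=> /asboolP.
exists Ss; split=> [|i q' Hi]; last exact: (nth_Ss i q' Hi).1.
exists Ss; split; first by rewrite size_map size_iota.
split=> //; case: (eqVneq S set0) => [S0 | SN0]; [left | right].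
  split=> // i Hi; apply/setP=> q'; rewrite inE.
  by apply/negbTE/negP => /(nth_Ss i q' Hi)[q]; rewrite S0 inE.
split=> //; exists Gamma; split=> [q Hq | i Hi q']; last exact: nth_Ss.
by split; [exact: HGamma | exact: GammaR].
Qed.

Lemma dom_aut_sound S s q :
  bounded_vars rk R -> dom (dom_aut_rule rk R) S s -> q \in S -> dom R q s.
Proof.
move=> bR; elim/tree_ind_in: s S q => a ss IH S q /dom_Node[xi Hxi Hchild] Hq.
have [Ss Exi [x Hx HxSs]] := dom_aut_rule_pick bR Hxi Hq; subst xi.
apply/dom_Node; exists x => // q' i /HxSs[Hi Hq'].
have [s Hs HSs] := Hchild _ i ((occurs_aut_args _ _ _ _).2 (conj Hi erefl)).
by exists s => //; apply: IH HSs Hq'; apply: List.nth_error_In Hs.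
Qed.

Lemma dom_aut_complete (S : {set Q}) s :
  wf_tree rk s -> (forall q, q \in S -> dom R q s) -> dom (dom_aut_rule rk R) S s.
Proof.
elim/tree_ind_in: s S => a ss IH S Hwf HS.
inversion Hwf as [a' ss' Hsize Hwfs]; subst.
pose Gamma q x := R q a x /\ forall q' i, occurs q' i x -> dom_child R ss q' i.
have [|Ss [HSs HSs_child]] := @dom_aut_rule_intro S a Gamma _ (fun q x => @proj1 _ _).
  by move=> q /HS/dom_Node[x Hx Hchild]; exists x.
apply/dom_Node; exists (RNode a (aut_args a Ss)) => // _ i /occurs_aut_args[Hi ->].
have Hs : List.nth_error ss i = Some (nth (Node a ss) ss i).
  by rewrite (nth_errorE (Node a ss)) Hsize Hi.
have Hin := List.nth_error_In _ _ Hs.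
exists (nth (Node a ss) ss i) => //; apply: IH Hin _ (Hwfs _ Hin) _ => q'.
case/(HSs_child i q' Hi) => q _ [x [[_ Hchild] /Hchild[s' Hs' Hdom]]].
by move: Hs'; rewrite Hs => -[->].
Qed.

End DomainAutomaton.

Lemma translate_dom_aut (Q : Type) (Q2 : finType) (Del Om : Type) (rkD : Del -> nat)
    (R2 : Q2 -> Del -> rhs Q2 Om -> Prop) (xi0 : rhs Q Del) S xi q2 :
  bounded_vars rkD R2 ->
  translate (dom_aut_rule rkD R2) S xi0 xi -> q2 \in S ->
  exists2 g, translate R2 q2 xi g & forall y i, occurs y i g -> y.2 \in y.1.2.
Proof.
move=> bR2; elim/rhs_ind_in: xi0 S xi q2 => [q i | b xis IH] S xi q2 Hxi Hq2.
  inversion Hxi; subst; exists (RVar (q, S, q2) i); first exact: translate_var.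
  by move=> y j Hocc; inversion Hocc.
inversion Hxi as [|S' b' xis' eta z Heta Hsub]; subst.
have [Ss Eeta [x Hx HxSs]] := dom_aut_rule_pick bR2 Heta Hq2; subst eta.
have [zs -> Hzs] := subst_aut_args Hsub.
pose G p j g := exists zj, List.nth_error zs j = Some zj /\
  translate R2 p zj g /\ forall y i, occurs y i g -> y.2 \in y.1.2.
have [g Hg] : exists g, subst (@RNode _ Om) G x g.
  apply: subst_exists => p j /HxSs[Hj Hp].
  have [zj Hzj [xj [Hxj Hzj_tr]]] := Hzs j Hj.
  have [g Hg Hvalid] := IH xj (List.nth_error_In _ _ Hxj) _ _ p Hzj_tr Hp.
  by exists g, zj.
exists g.
  apply: translate_node Hx _; apply: subst_impl Hg => p j g' [zj [Hzj [Hg' _]]].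
  by exists zj.
move=> y i /(subst_RNode_occurs Hg)[p [j [g' [[zj [_ [_ Hvalid]]] Hocc]]]].
exact: Hvalid Hocc.
Qed.

Section DomainRelabeling.
Variables (Y : finType) (Sig Out : Type) (R : Y -> Sig -> rhs Y Out -> Prop).

Definition dom_set (s : tree Sig) : {set Y} := [set y | `[< dom R y s >]].

Fixpoint dom_relabel (s : tree Sig) : tree (Sig * seq {set Y}) :=
  let: Node a ss := s in Node (a, map dom_set ss) (map dom_relabel ss).

Lemma relabel_dom_relabel (rk : Sig -> nat) s :
  wf_tree rk s -> relabel (dom (dom_aut_rule rk R)) s (dom_relabel s).
Proof.
elim/tree_ind_in: s => a ss IH Hwf; inversion Hwf as [a' ss' _ Hwfs]; subst.
constructor; first apply: Forall2_map_l => s Hs.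
  by apply: dom_aut_complete (Hwfs s Hs) _ => y; rewrite inE => /asboolP.
by apply: Forall2_map_r => s Hs; apply: IH Hs (Hwfs s Hs).
Qed.

End DomainRelabeling.

Section LookAheadTransducer.
Variables (Q1 Q2 : finType) (Sig Del Om : Type) (rkS : Sig -> nat) (rkD : Del -> nat).
Variables (R1 : Q1 -> Sig -> rhs Q1 Del -> Prop) (R2 : Q2 -> Del -> rhs Q2 Om -> Prop).

Lemma M_rule_dom_sound s r x :
  bounded_vars rkS R1 ->
  relabel (dom (Ahat_rule rkS rkD R1 R2)) s r -> dom (M_rule rkS rkD R1 R2) x r ->
  dom (hat_rule rkD R1 R2) x.1 s.
Proof.
move=> /(prod_rule_bounded_vars (R' := dom_aut_rule rkD R2)) bhat Hrel.
inversion Hrel as [a ss ls rs Hls _]; subst.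
case/dom_Node=> g [_ [_ [/= Hsize [xi [Hxi [_ Hxi_ls]]]]]] _.
apply/dom_Node; exists xi => // y i Hocc.
have Hi : i < rkS a := bhat _ _ _ _ _ Hxi Hocc.
have Hl : List.nth_error ls i = Some (nth set0 ls i).
  by rewrite (nth_errorE set0) Hsize Hi.
have [s Hs Hdom] := Forall2_nth_error Hls Hl.
by exists s => //; apply: dom_aut_sound bhat Hdom (Hxi_ls i Hi y Hocc).
Qed.

Lemma M_rule_dom_complete s x :
  bounded_vars rkD R2 -> wf_tree rkS s -> Mvalid x ->
  dom (hat_rule rkD R1 R2) x.1 s ->
  dom (M_rule rkS rkD R1 R2) x (dom_relabel (hat_rule rkD R1 R2) s).
Proof.
move=> bR2; elim/tree_ind_in: s x => a ss IH [[q1 S] q2] Hwf Hq2.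
inversion Hwf as [a' ss' Hsize Hwfs]; subst.
case/dom_Node=> xi [xi0 [/= Hxi0 Hxi]] Hchild.
have [g Hg Hvalid] := translate_dom_aut bR2 Hxi Hq2.
apply/dom_Node; exists g.
  split=> //; split=> //; split; first by rewrite /= size_map.
  exists xi; split; first by exists xi0.
  split=> // i Hi y /Hchild[s Hs Hdom] /=.
  move: Hs; rewrite (nth_errorE (Node a ss)) Hsize Hi => -[Hnth].
  by rewrite (nth_map (Node a ss)) ?Hsize // Hnth inE; apply/asboolP.
move=> [y q'] i Hocc; have /Hchild[s Hs Hdom] := translate_occurs Hg Hocc.
exists (dom_relabel (hat_rule rkD R1 R2) s); first by rewrite nth_error_map Hs.
have Hin := List.nth_error_In _ _ Hs.
exact: IH Hin (y, q') (Hwfs _ Hin) (Hvalid _ _ Hocc) Hdom.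
Qed.

End LookAheadTransducer.

Theorem lemma16 (Q1 Q2 Sig Del Om : finType)
  (rkS : Sig -> nat) (rkD : Del -> nat) (rkO : Om -> nat)
  (T1 : tdtt Q1 Sig Del) (T2 : tdtt Q2 Del Om) :
  is_tdtt rkS rkD T1 -> is_tdtt rkD rkO T2 ->
  forall (q1 : Q1) (S : {set Q2}) (q2 : Q2), q2 \in S ->
  forall s : tree Sig, wf_tree rkS s ->
    (M_dom rkS rkD (rule T1) (rule T2) (q1, S, q2) s <->
     dom (hat_rule rkD (rule T1) (rule T2)) (q1, S) s).
Proof.
move=> /is_tdtt_bounded_vars bR1 /is_tdtt_bounded_vars bR2 q1 S q2 Hq2 s Hwf.
split=> [[r [Hrel Hdom]] | Hdom]; first exact: M_rule_dom_sound bR1 Hrel Hdom.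
exists (dom_relabel (hat_rule rkD (rule T1) (rule T2)) s); split.
  exact: relabel_dom_relabel.
exact: M_rule_dom_complete.
Qed.
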